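(* Let $\lambda>0$, $v_2<v_1$ with either $v_2<0<v_1$ or $0<v_2<v_1$, $t\ge0$ and $j\in\{1,2\}$. With $\Delta_j^\lambda(\xi,t)$ the mean-square distance (defined in the context) between the reset process with reset rate $\xi>0$ and the process without resets, one has $$\lim_{\xi\to+\infty}\Delta_j^\lambda(\xi,t)=E_j[X^2(t)]=\frac{t^2[3v_j^2+\lambda t(v_1^2+v_1v_2+v_2^2)]}{3(1+\lambda t)}.$$
   Context: GCP with intensity $\lambda>0$: a Poisson process whose rate is random, exponentially distributed with mean $\lambda$; increments satisfy $P\{\tilde N_\lambda(t+s)-\tilde N_\lambda(t)=k\}=\frac{1}{1+\lambda s}(\frac{\lambda s}{1+\lambda s})^k$. Process without resets $X(t)$: a particle starts at the origin with velocity $v_j$ ($v_1,v_2\neq0$, $v_2<v_1$), moves with velocity alternating between $v_1$ and $v_2$, the periods at velocity $v_1$ and at $v_2$ governed by two independent GCPs of intensity $\lambda$; its law given $V(0)=v_j$ has generalized density $p(x,t|v_j)=\frac{\delta(x-v_jt)}{1+\lambda t}+\mathbb 1_{\{v_2t<x<v_1t\}}\frac{\lambda}{(v_1-v_2)(1+\lambda t)}$ ($\delta$ Dirac delta), with $E_j[X(t)]=\frac{t[2v_j+\lambda t(v_1+v_2)]}{2(1+\lambda t)}$ and $E_j[X^2(t)]$ as in the claim. Reset process $\tilde X(t)$ (reset rate $\xi>0$): same dynamics but instantaneously reset to the origin at the epochs of an independent Poisson process of rate $\xi$, restarting afresh with velocity $v_j$; its density is $\tilde p(x,t|v_j)=e^{-\xi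 t}p(x,t|v_j)+\xi\int_0^te^{-\xi s}p(x,s|v_j)ds$. $E_j$ denotes expectation conditional on start at the origin with velocity $v_j$. Mean-square distance: $\Delta_j^\lambda(\xi,t):=E_j[\tilde X^2(t)]+E_j[X^2(t)]-2E_j[\tilde X(t)]E_j[X(t)]$. *)

From Stdlib Require Import Reals.
From Coquelicot Require Import Coquelicot.
Open Scope R_scope.

Definition vel (v1 v2 : R) (j : nat) : R := if Nat.eqb j 1 then v1 else v2.

(* E_j[f(X(t))] computed from the generalized density
   p(x,t|v_j) = delta(x - v_j t)/(1+lam t)
              + 1_{v2 t < x < v1 t} lam / ((v1-v2)(1+lam t)). *)
Definition expect_free (lam v1 v2 : R) (j : nat) (f : R -> R) (t : R) : R :=
  f (vel v1 v2 j * t) / (1 + lam * t)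
  + lam / ((v1 - v2) * (1 + lam * t)) * RInt f (v2 * t) (v1 * t).

(* E_j[f(X~(t))] computed from the reset density
   p~(x,t|v_j) = e^{-xi t} p(x,t|v_j) + xi int_0^t e^{-xi s} p(x,s|v_j) ds. *)
Definition expect_reset (lam xi v1 v2 : R) (j : nat) (f : R -> R) (t : R) : R :=
  exp (- xi * t) * expect_free lam v1 v2 j f t
  + xi * RInt (fun s => exp (- xi * s) * expect_free lam v1 v2 j f s) 0 t.

Definition msd_Delta (lam v1 v2 : R) (j : nat) (xi t : R) : R :=
  expect_reset lam xi v1 v2 j (fun x => x ^ 2) t
  + expect_free lam v1 v2 j (fun x => x ^ 2) t
  - 2 * expect_reset lam xi v1 v2 j (fun x => x) t
      * expect_free lam v1 v2 j (fun x => x) t.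

From Stdlib Require Import Reals Lra.
From Coquelicot Require Import Coquelicot.
Open Scope R_scope.

(* The reset law acts on a free moment G through the transform
   G |-> e^{-xi t} G(t) + xi int_0^t e^{-xi s} G(s) ds.  The n-th free moment is
   s^n (v_j^n + lam s m_n) / (1 + lam s), m_n being the n-th moment of the uniform
   law on [v2, v1]; it is a convex combination of v_j^n and m_n scaled by s^n, hence
   O(s) on [0, t] when n >= 1.  The transform of a function bounded by K s is at most
   2K/xi, since xi t e^{-xi t} <= 1 and int_0^t s e^{-xi s} ds <= 1/xi^2.  So both
   reset moments vanish as xi -> +oo, and Delta tends to the free second moment. *)

Lemma continuous_of_ex_derive (f : R -> R) (x : R) : ex_derive f x -> continuous f x.
Proof. exact (ex_derive_continuous (K := R_AbsRing) (V := R_NormedModule) f x). Qed.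

Lemma is_lim_p_infty_0_of_le_inv (f : R -> R) (C : R) :
  (forall x, 0 < x -> Rabs (f x) <= C / x) -> is_lim f p_infty 0.
Proof.
  intros Hf.
  assert (HC : is_lim (fun x => C / x) p_infty 0).
  { replace (Finite 0) with (Rbar_mult C (Rbar_inv p_infty)) by (simpl; f_equal; ring).
    apply is_lim_scal_l, is_lim_inv; [apply is_lim_id | discriminate]. }
  apply (is_lim_le_le_loc (fun x => - (C / x)) (fun x => C / x)); [| | exact HC].
  - exists 0; intros x Hx; apply Rabs_le_between, Hf, Hx.
  - replace (Finite 0) with (Rbar_opp 0) by (simpl; f_equal; ring).
    now apply is_lim_opp.
Qed.

Lemma RInt_pow (n : nat) (a b : R) :
  RInt (fun x => x ^ n) a b = (b ^ S n - a ^ S n) / INR (S n).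
Proof.
  assert (Hn : INR (S n) <> 0) by (apply not_0_INR; discriminate).
  apply is_RInt_unique.
  replace ((b ^ S n - a ^ S n) / INR (S n))
    with (minus (b ^ S n / INR (S n)) (a ^ S n / INR (S n)))
    by (unfold minus, plus, opp; cbn -[INR pow]; field; exact Hn).
  apply (is_RInt_derive (fun x => x ^ S n / INR (S n))).
  - intros x _. auto_derive; [exact I |]. cbn [pred]. field. exact Hn.
  - intros x _. apply continuous_of_ex_derive. auto_derive. exact I.
Qed.

Lemma mul_exp_opp_le_1 (x : R) : x * exp (- x) <= 1.
Proof.
  pose proof (exp_ineq1_le x). pose proof (exp_pos x).
  rewrite exp_Ropp.
  apply Rmult_le_reg_r with (exp x); [assumption |].
  rewrite Rmult_assoc, Rinv_l by lra. lra.
Qed.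

Lemma is_RInt_id_mul_exp (xi t : R) : xi <> 0 ->
  is_RInt (fun s => s * exp (- xi * s)) 0 t
    (/ xi ^ 2 - (t / xi + / xi ^ 2) * exp (- xi * t)).
Proof.
  intros Hxi.
  set (F := fun s => - (s / xi + / xi ^ 2) * exp (- xi * s)).
  replace (/ xi ^ 2 - (t / xi + / xi ^ 2) * exp (- xi * t)) with (minus (F t) (F 0)).
  2: { unfold F, minus, plus, opp; cbn -[pow].
       rewrite Rmult_0_r, exp_0. field. exact Hxi. }
  refine (is_RInt_derive F _ 0 t _ _).
  - intros s _. unfold F. auto_derive; [exact I |]. field. exact Hxi.
  - intros s _. apply continuous_of_ex_derive. auto_derive. exact I.
Qed.

Definition reset_transform (xi : R) (G : R -> R) (t : R) : R :=
  exp (- xi * t) * G t + xi * RInt (fun s => exp (- xi * s) * G s) 0 t.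

Lemma Rabs_exp_mul_le (g K xi t : R) :
  0 <= K -> 0 < xi -> Rabs g <= K * t -> Rabs (exp (- xi * t) * g) <= K / xi.
Proof.
  intros HK Hxi Hg.
  pose proof (exp_pos (- xi * t)). pose proof (mul_exp_opp_le_1 (xi * t)).
  replace (- (xi * t)) with (- xi * t) in * by ring.
  rewrite Rabs_mult, Rabs_pos_eq by lra.
  apply Rmult_le_reg_l with xi; [exact Hxi |].
  replace (xi * (K / xi)) with K by (field; lra).
  apply Rle_trans with (K * (xi * t * exp (- xi * t))).
  - replace (K * (xi * t * exp (- xi * t))) with (xi * (exp (- xi * t) * (K * t))) by ring.
    apply Rmult_le_compat_l; [lra |]. apply Rmult_le_compat_l; lra.
  - rewrite <- Rmult_1_r. apply Rmult_le_compat_l; lra.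
Qed.

Lemma Rabs_RInt_exp_mul_le (G : R -> R) (K xi t : R) :
  0 <= K -> 0 < xi -> 0 <= t ->
  (forall s, 0 <= s <= t -> continuous G s) ->
  (forall s, 0 <= s <= t -> Rabs (G s) <= K * s) ->
  Rabs (RInt (fun s => exp (- xi * s) * G s) 0 t) <= K / xi ^ 2.
Proof.
  intros HK Hxi Ht HGc HG.
  assert (Hex : ex_RInt (fun s => exp (- xi * s) * G s) 0 t).
  { apply (ex_RInt_continuous (V := R_CompleteNormedModule)).
    rewrite Rmin_left, Rmax_right by exact Ht. intros s Hs.
    apply (continuous_mult (K := R_AbsRing) (fun s => exp (- xi * s)) G s).
    - apply continuous_of_ex_derive. auto_derive. exact I.
    - apply HGc, Hs. }
  assert (Hmaj : is_RInt (fun s => K * (s * exp (- xi * s))) 0 t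
                   (K * (/ xi ^ 2 - (t / xi + / xi ^ 2) * exp (- xi * t)))).
  { apply (is_RInt_scal (V := R_NormedModule)), is_RInt_id_mul_exp. lra. }
  eapply Rle_trans.
  - refine (norm_RInt_le _ _ 0 t _ _ Ht _ (RInt_correct _ _ _ Hex) Hmaj).
    intros s Hs. change (Rabs (exp (- xi * s) * G s) <= K * (s * exp (- xi * s))).
    rewrite Rabs_mult, Rabs_pos_eq by (left; apply exp_pos).
    replace (K * (s * exp (- xi * s))) with (exp (- xi * s) * (K * s)) by ring.
    apply Rmult_le_compat_l; [left; apply exp_pos | apply HG, Hs].
  - assert (0 <= (t / xi + / xi ^ 2) * exp (- xi * t)).
    { apply Rmult_le_pos; [| left; apply exp_pos].
      apply Rplus_le_le_0_compat; [apply Rdiv_le_0_compat; lra |].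
      left; apply Rinv_0_lt_compat, pow_lt, Hxi. }
    unfold Rdiv. apply Rmult_le_compat_l; lra.
Qed.

Lemma Rabs_reset_transform_le (G : R -> R) (K xi t : R) :
  0 <= K -> 0 < xi -> 0 <= t ->
  (forall s, 0 <= s <= t -> continuous G s) ->
  (forall s, 0 <= s <= t -> Rabs (G s) <= K * s) ->
  Rabs (reset_transform xi G t) <= 2 * K / xi.
Proof.
  intros HK Hxi Ht HGc HG.
  pose proof (Rabs_exp_mul_le (G t) K xi t HK Hxi (HG t (conj Ht (Rle_refl t)))).
  pose proof (Rabs_RInt_exp_mul_le G K xi t HK Hxi Ht HGc HG).
  unfold reset_transform.
  eapply Rle_trans; [apply Rabs_triang |].
  rewrite (Rabs_mult xi), (Rabs_pos_eq xi) by lra.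
  assert (xi * Rabs (RInt (fun s => exp (- xi * s) * G s) 0 t) <= K / xi).
  { replace (K / xi) with (xi * (K / xi ^ 2)) by (field; lra).
    apply Rmult_le_compat_l; lra. }
  lra.
Qed.

Lemma is_lim_reset_transform (G : R -> R) (K t : R) :
  0 <= K -> 0 <= t ->
  (forall s, 0 <= s <= t -> continuous G s) ->
  (forall s, 0 <= s <= t -> Rabs (G s) <= K * s) ->
  is_lim (fun xi => reset_transform xi G t) p_infty 0.
Proof.
  intros HK Ht HGc HG.
  apply is_lim_p_infty_0_of_le_inv with (2 * K).
  intros xi Hxi. now apply Rabs_reset_transform_le.
Qed.

Lemma Rabs_convex_comb_le (a b c M : R) :
  0 <= c -> Rabs a <= M -> Rabs b <= M -> Rabs ((a + c * b) / (1 + c)) <= M.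
Proof.
  intros Hc Ha Hb.
  unfold Rdiv. rewrite Rabs_mult, Rabs_inv, (Rabs_pos_eq (1 + c)) by lra.
  apply Rmult_le_reg_r with (1 + c); [lra |].
  rewrite Rmult_assoc, Rinv_l, Rmult_1_r by lra.
  eapply Rle_trans; [apply Rabs_triang |].
  rewrite Rabs_mult, (Rabs_pos_eq c) by lra.
  pose proof (Rmult_le_compat_l c _ _ Hc Hb). lra.
Qed.

Definition unif_moment (v1 v2 : R) (n : nat) : R :=
  (v1 ^ S n - v2 ^ S n) / (INR (S n) * (v1 - v2)).

Lemma expect_free_pow (lam v1 v2 : R) (j n : nat) (s : R) :
  expect_free lam v1 v2 j (fun x => x ^ n) s
  = s ^ n * (vel v1 v2 j ^ n + lam * s * unif_moment v1 v2 n) / (1 + lam * s).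
Proof.
  unfold expect_free, unif_moment. rewrite RInt_pow, !Rpow_mult_distr.
  cbn [pow]. unfold Rdiv. rewrite !Rinv_mult. ring.
Qed.

Lemma Rabs_expect_free_pow_le (lam v1 v2 : R) (j n : nat) (s t : R) :
  0 <= lam -> 0 <= s <= t ->
  Rabs (expect_free lam v1 v2 j (fun x => x ^ S n) s)
  <= t ^ n * (Rabs (vel v1 v2 j ^ S n) + Rabs (unif_moment v1 v2 (S n))) * s.
Proof.
  intros Hlam Hs.
  set (M := Rabs (vel v1 v2 j ^ S n) + Rabs (unif_moment v1 v2 (S n))).
  assert (HM : Rabs ((vel v1 v2 j ^ S n + lam * s * unif_moment v1 v2 (S n)) / (1 + lam * s)) <= M).
  { apply Rabs_convex_comb_le; unfold M.
    - apply Rmult_le_pos; lra.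
    - pose proof (Rabs_pos (unif_moment v1 v2 (S n))); lra.
    - pose proof (Rabs_pos (vel v1 v2 j ^ S n)); lra. }
  rewrite expect_free_pow, <- Rmult_div_assoc, Rabs_mult, Rabs_pos_eq by (apply pow_le; lra).
  assert (Hpow : s ^ S n <= t ^ n * s).
  { cbn [pow]. rewrite Rmult_comm.
    apply Rmult_le_compat_r; [lra | apply pow_incr; lra]. }
  assert (0 <= M) by (eapply Rle_trans; [apply Rabs_pos | exact HM]).
  apply Rle_trans with (s ^ S n * M).
  - apply Rmult_le_compat_l; [apply pow_le; lra | exact HM].
  - replace (t ^ n * M * s) with (t ^ n * s * M) by ring.
    apply Rmult_le_compat_r; assumption.
Qed.

Lemma continuous_expect_free_pow (lam v1 v2 : R) (j n : nat) (s : R) :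
  0 <= lam -> 0 <= s -> continuous (expect_free lam v1 v2 j (fun x => x ^ n)) s.
Proof.
  intros Hlam Hs.
  apply (continuous_ext (fun s => s ^ n * (vel v1 v2 j ^ n + lam * s * unif_moment v1 v2 n) / (1 + lam * s))).
  { intros x. symmetry. apply expect_free_pow. }
  apply continuous_of_ex_derive. auto_derive.
  pose proof (Rmult_le_pos _ _ Hlam Hs). lra.
Qed.

Lemma is_lim_expect_reset_pow (lam v1 v2 : R) (j n : nat) (t : R) :
  0 <= lam -> 0 <= t ->
  is_lim (fun xi => expect_reset lam xi v1 v2 j (fun x => x ^ S n) t) p_infty 0.
Proof.
  intros Hlam Ht.
  (* [expect_reset] is, definitionally, [reset_transform] of the free moment. *)
  apply (is_lim_reset_transform _
           (t ^ n * (Rabs (vel v1 v2 j ^ S n) + Rabs (unif_moment v1 v2 (S n))))); [| exact Ht | |].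
  - apply Rmult_le_pos; [apply pow_le; exact Ht |].
    apply Rplus_le_le_0_compat; apply Rabs_pos.
  - intros s Hs. apply continuous_expect_free_pow; [exact Hlam | apply Hs].
  - intros s Hs. now apply Rabs_expect_free_pow_le.
Qed.

Lemma expect_reset_ext (lam xi v1 v2 : R) (j : nat) (f g : R -> R) (t : R) :
  (forall x, f x = g x) ->
  expect_reset lam xi v1 v2 j f t = expect_reset lam xi v1 v2 j g t.
Proof.
  intros Hfg.
  assert (Hfree : forall s, expect_free lam v1 v2 j f s = expect_free lam v1 v2 j g s).
  { intros s. unfold expect_free. now rewrite Hfg, (RInt_ext f g) by (intros; apply Hfg). }
  unfold expect_reset. rewrite Hfree. f_equal. f_equal.
  apply RInt_ext. intros s _. now rewrite Hfree.
Qed.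

Theorem corollary6 (lam v1 v2 t : R) (j : nat) :
  0 < lam -> v2 < v1 -> ((v2 < 0 /\ 0 < v1) \/ (0 < v2 /\ v2 < v1)) ->
  0 <= t -> (j = 1%nat \/ j = 2%nat) ->
  is_lim (fun xi => msd_Delta lam v1 v2 j xi t) p_infty
         (expect_free lam v1 v2 j (fun x => x ^ 2) t)
  /\ expect_free lam v1 v2 j (fun x => x ^ 2) t
     = t ^ 2 * (3 * (vel v1 v2 j) ^ 2 + lam * t * (v1 ^ 2 + v1 * v2 + v2 ^ 2))
       / (3 * (1 + lam * t)).
Proof.
  intros Hlam Hv _ Ht _.
  split.
  - set (F1 := expect_free lam v1 v2 j (fun x => x) t).
    set (F2 := expect_free lam v1 v2 j (fun x => x ^ 2) t).
    assert (L1 : is_lim (fun xi => expect_reset lam xi v1 v2 j (fun x => x) t) p_infty 0).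
    { apply (is_lim_ext (fun xi => expect_reset lam xi v1 v2 j (fun x => x ^ 1) t)).
      - intros xi. apply expect_reset_ext. intros x. ring.
      - apply is_lim_expect_reset_pow; lra. }
    assert (L2 : is_lim (fun xi => expect_reset lam xi v1 v2 j (fun x => x ^ 2) t) p_infty 0)
      by (apply is_lim_expect_reset_pow; lra).
    pose proof (is_lim_minus' _ _ _ _ _
                  (is_lim_plus' _ _ _ _ _ L2 (is_lim_const F2 p_infty))
                  (is_lim_scal_l _ (2 * F1) _ _ L1)) as L.
    replace (0 + F2 - 2 * F1 * 0) with F2 in L by ring.
    eapply is_lim_ext; [| exact L].
    intros xi. unfold msd_Delta. fold F1 F2. ring.
  - rewrite expect_free_pow. unfold unif_moment.
    replace (INR 3) with 3 by (cbn; ring).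
    assert (1 + lam * t <> 0) by (pose proof (Rmult_le_pos lam t (Rlt_le _ _ Hlam) Ht); lra).
    field. split; [assumption | lra].
Qed.
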